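(* Let $\mathbf A$ be a finite relational structure with a majority polymorphism and a Maltsev polymorphism, and let $\mathcal A=\mathcal V(\mathrm{Alg}(\mathbf A))$. Let $\mathcal I=(V,\{\mathbb A_x\},\{R_{xy}\},w)$ be an instance of $\mathrm{CSP}(\mathcal A)$ as in the context with $|V|>1$, such that every domain $\mathbb A_x$ either has exactly one element or is subdirectly irreducible and prime. Then for every $x\in V$ there is a variable $y\ne x$ with $\theta_{xy}=0_{A_x}$, and for any such $y$ the relation $R_{yx}$ is the graph of a surjective homomorphism from $\mathbb A_y$ onto $\mathbb A_x$.
   Context: $\mathrm{Alg}(\mathbf A)$ is the algebra on $A$ whose operations are all polymorphisms of $\mathbf A$; $\mathcal V(\cdot)$ denotes the generated variety. An instance of $\mathrm{CSP}(\mathcal A)$ considered here is $(V,\{\mathbb A_x\}_{x\in V},\{R_{xy}\}_{(x,y)\in V^2},w)$: for each variable $x$ a finite algebra $\mathbb A_x\in\mathcal A$ with universe $A_x$; for each pair $(x,y)$ a binary relation $R_{xy}$ that is the universe of a subalgebra of $\mathbb A_x\times\mathbb A_y$, with $R_{xx}$ the equality relation $0_{A_x}$, $R_{yx}=R_{xy}^{-1}$, and for $x\ne y$, $R_{xy}$ subdirect (both projections onto). For $x\ne y$, $\theta_{xy}=\{(a,a')\in A_x^2\mid\exists b\in A_y:(a,b),(a',b)\in R_{xy}\}$, $\mu_x=\bigwedge_{y\ne x}\theta_{xy}$; $\mathbb A_x$ is prime if $\mu_x=0_{A_x}$. An algebra is subdirectly irreducible if it has at least two elements and the intersection of its nontrivial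 (non-equality) congruences is not the equality relation. *)

From mathcomp Require Import all_boot.
Set Implicit Arguments. Unset Strict Implicit. Unset Printing Implicit Defensive.

(* A finite relational structure: finite domain, finitely many relations
   (indexed by a finType), relation j of arity rar j. Tuples of length k
   are functions 'I_k -> domain. *)
Record rstruct := RStruct {
  rdom : finType;
  ridx : finType;
  rar : ridx -> nat;
  rrel : forall j : ridx, ('I_(rar j) -> rdom) -> Prop }.

Definition polymorphism (A : rstruct) (n : nat) (f : ('I_n -> rdom A) -> rdom A) : Prop :=
  forall (j : ridx A) (t : 'I_n -> 'I_(rar j) -> rdom A),
    (forall i, rrel (t i)) -> rrel (fun k => f (fun i => t i k)).

Definition tup3 (T : Type) (a b c : T) : 'I_3 -> T :=
  fun i => match nat_of_ord i with 0 => a | 1 => b | _ => c end.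

Definition has_majority_polymorphism (A : rstruct) : Prop :=
  exists m : ('I_3 -> rdom A) -> rdom A, polymorphism m /\
    forall x y : rdom A, [/\ m (tup3 x x y) = x, m (tup3 x y x) = x & m (tup3 y x x) = x].

Definition has_maltsev_polymorphism (A : rstruct) : Prop :=
  exists p : ('I_3 -> rdom A) -> rdom A, polymorphism p /\
    forall x y : rdom A, p (tup3 x y y) = x /\ p (tup3 y y x) = x.

(* Signature of Alg(A): one operation symbol per polymorphism (of each arity). *)
Definition sig (A : rstruct) :=
  {n : nat & {f : ('I_n -> rdom A) -> rdom A | polymorphism f}}.
Definition sar {A : rstruct} (s : sig A) : nat := projT1 s.
Definition sop {A : rstruct} (s : sig A) : ('I_(sar s) -> rdom A) -> rdom A :=
  proj1_sig (projT2 s).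
Arguments sop {A} s _.

Record algebra (A : rstruct) := Algebra {
  acar : finType;
  aop : forall s : sig A, ('I_(sar s) -> acar) -> acar }.
Arguments aop {A} a s _.

(* B is in V(Alg(A)) = HSP(Alg(A)): B is a homomorphic image (under h)
   of a subalgebra S of a power Alg(A)^I, I an arbitrary index type. *)
Definition in_variety (A : rstruct) (B : algebra A) : Prop :=
  exists (I : Type) (S : (I -> rdom A) -> Prop) (h : (I -> rdom A) -> acar B),
    [/\ (forall (s : sig A) (g : 'I_(sar s) -> I -> rdom A),
           (forall k, S (g k)) -> S (fun i => sop s (fun k => g k i))),
        (forall (s : sig A) (g : 'I_(sar s) -> I -> rdom A),
           (forall k, S (g k)) ->
           h (fun i => sop s (fun k => g k i)) = aop B s (fun k => h (g k))) &
        (forall b : acar B, exists g, S g /\ h g = b)].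

Definition congruence (A : rstruct) (B : algebra A) (th : acar B -> acar B -> Prop) : Prop :=
  [/\ (forall a, th a a), (forall a b, th a b -> th b a),
      (forall a b c, th a b -> th b c -> th a c) &
      (forall (s : sig A) (g g' : 'I_(sar s) -> acar B),
          (forall k, th (g k) (g' k)) -> th (aop B s g) (aop B s g'))].

Definition subdirectly_irreducible (A : rstruct) (B : algebra A) : Prop :=
  1 < #|acar B| /\
  exists a b : acar B, a <> b /\
    forall th, congruence th -> ~ (forall c d, th c d <-> c = d) -> th a b.

Definition hom (A : rstruct) (B C : algebra A) (f : acar B -> acar C) : Prop :=
  forall (s : sig A) (g : 'I_(sar s) -> acar B), f (aop B s g) = aop C s (fun k => f (g k)).

Definition subuniverse2 (A : rstruct) (B C : algebra A) (R : acar B -> acar C -> Prop) : Prop :=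
  forall (s : sig A) (g : 'I_(sar s) -> acar B) (g' : 'I_(sar s) -> acar C),
    (forall k, R (g k) (g' k)) -> R (aop B s g) (aop C s g').

Definition theta (A : rstruct) (V : finType) (D : V -> algebra A)
    (R : forall x y : V, acar (D x) -> acar (D y) -> Prop)
    (x y : V) (a a' : acar (D x)) : Prop :=
  exists b : acar (D y), R x y a b /\ R x y a' b.
Arguments theta {A V D} R x y a a'.

Definition prime_dom (A : rstruct) (V : finType) (D : V -> algebra A)
    (R : forall x y : V, acar (D x) -> acar (D y) -> Prop) (x : V) : Prop :=
  forall a a' : acar (D x), (forall y, y <> x -> theta R x y a a') <-> a = a'.
Arguments prime_dom {A V D} R x.

(** For y <> x the relation theta_xy is the kernel of the projection of R_xy
    onto A_y, and the Maltsev polymorphism makes it transitive, so it is a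
    congruence of A_x.  If A_x is subdirectly irreducible and prime, these
    congruences meet in the equality relation, which is impossible unless one
    of them already is the equality relation, since the monolith lies below
    every non-trivial congruence.  Once theta_xy is the equality relation,
    R_xy relates each element of A_y to exactly one element of A_x, so R_yx is
    the graph of a map; this map is a homomorphism because R_xy is a
    subuniverse, and it is onto because R_xy is subdirect. *)

From mathcomp Require Import all_boot.
From Stdlib Require Import Classical ClassicalEpsilon FunctionalExtensionality.
Set Implicit Arguments. Unset Strict Implicit.

Lemma tup3_ind (T : Type) (P : T -> Prop) (a b c : T) :
  P a -> P b -> P c -> forall k : 'I_3, P (tup3 a b c k).
Proof. by move=> Pa Pb Pc k; rewrite /tup3; case: (nat_of_ord k) => [|[|n]]. Qed.

Lemma tup3_ind2 (T U : Type) (P : T -> U -> Prop) (a b c : T) (a' b' c' : U) :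
  P a a' -> P b b' -> P c c' -> forall k : 'I_3, P (tup3 a b c k) (tup3 a' b' c' k).
Proof. by move=> Pa Pb Pc k; rewrite /tup3; case: (nat_of_ord k) => [|[|n]]. Qed.

Lemma tup3_map (T U : Type) (h : T -> U) (a b c : T) :
  (fun k : 'I_3 => h (tup3 a b c k)) = tup3 (h a) (h b) (h c).
Proof.
by apply: functional_extensionality => k; rewrite /tup3; case: (nat_of_ord k) => [|[|n]].
Qed.

Lemma tup3_app (T U : Type) (g1 g2 g3 : T -> U) (i : T) :
  (fun k : 'I_3 => tup3 g1 g2 g3 k i) = tup3 (g1 i) (g2 i) (g3 i).
Proof.
by apply: functional_extensionality => k; rewrite /tup3; case: (nat_of_ord k) => [|[|n]].
Qed.

Section Maltsev.

Variable A : rstruct.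

Definition maltsev_sig (p : ('I_3 -> rdom A) -> rdom A) (Hp : polymorphism p) : sig A :=
  existT _ 3 (exist _ p Hp).

Definition maltsev_op (B : algebra A) (p : ('I_3 -> rdom A) -> rdom A) (Hp : polymorphism p) :=
  forall b b' : acar B,
    aop B (maltsev_sig Hp) (tup3 b b' b') = b /\ aop B (maltsev_sig Hp) (tup3 b' b' b) = b.

Lemma maltsev_op_in_variety (p : ('I_3 -> rdom A) -> rdom A) (Hp : polymorphism p) :
  (forall x y : rdom A, p (tup3 x y y) = x /\ p (tup3 y y x) = x) ->
  forall B : algebra A, in_variety B -> maltsev_op B Hp.
Proof.
move=> Hid B [I [S [h [_ Hh Hsurj]]]] b b'.
have [g [Sg <-]] := Hsurj b; have [g' [Sg' <-]] := Hsurj b'.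
have h_tup3 u v w : S u -> S v -> S w ->
    aop B (maltsev_sig Hp) (tup3 (h u) (h v) (h w)) = h (fun i => p (tup3 (u i) (v i) (w i))).
  move=> Su Sv Sw; rewrite -(tup3_map h) -Hh; last exact: tup3_ind.
  by congr h; apply: functional_extensionality => i; rewrite /sop /= tup3_app.
rewrite !h_tup3 //; split; congr h; apply: functional_extensionality => i;
  by case: (Hid (g i) (g' i)).
Qed.

End Maltsev.

Section KernelOfRelation.

Variables (A : rstruct) (B C : algebra A) (Q : acar B -> acar C -> Prop).
Hypothesis Qsub : subuniverse2 Q.

Definition rel_kernel (a a' : acar B) : Prop := exists c, Q a c /\ Q a' c.

Lemma rel_kernel_congruence (p : ('I_3 -> rdom A) -> rdom A) (Hp : polymorphism p) :
  maltsev_op B Hp -> maltsev_op C Hp -> (forall a, exists c, Q a c) ->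
  congruence rel_kernel.
Proof.
move=> malB malC Qtotal; split.
- by move=> a; have [c Hc] := Qtotal a; exists c.
- by move=> a a' [c [Hac Ha'c]]; exists c.
- move=> a a' a'' [c [Hac Ha'c]] [c' [Ha'c' Ha''c']]; exists c'; split=> //.
  (* apply the Maltsev operation to the pairs (a,c), (a',c), (a',c') *)
  have := @Qsub (maltsev_sig Hp) (tup3 a a' a') (tup3 c c c').
  by rewrite (proj1 (malB a a')) (proj2 (malC c' c)); apply; apply: tup3_ind2.
- move=> t g g' gg'.
  have [w Hw] : exists w : 'I_(sar t) -> acar C, forall k, Q (g k) (w k) /\ Q (g' k) (w k).
    exists (fun k => proj1_sig (constructive_indefinite_description _ (gg' k))).
    by move=> k; exact: proj2_sig (constructive_indefinite_description _ (gg' k)).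
  by exists (aop C t w); split; apply: Qsub => k; case: (Hw k).
Qed.

Lemma trivial_kernel_graph :
  (forall c, exists a, Q a c) -> (forall a a', rel_kernel a a' -> a = a') ->
  exists f : acar C -> acar B, hom f /\ forall c a, Q a c <-> a = f c.
Proof.
move=> Qonto Qinj.
pose f c := proj1_sig (constructive_indefinite_description _ (Qonto c)).
have Qf c : Q (f c) c by exact: proj2_sig (constructive_indefinite_description _ (Qonto c)).
have Q_graph c a : Q a c <-> a = f c by split=> [Qac|->]; first by apply: Qinj; exists c.
exists f; split=> // t g.
by symmetry; apply/Q_graph/Qsub => k; exact: Qf.
Qed.

End KernelOfRelation.

Lemma card1_reflexive_eq (T : finType) (th : T -> T -> Prop) :
  #|T| = 1 -> (forall a, th a a) -> forall a a', th a a' <-> a = a'.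
Proof.
move=> T1 threfl a a'; split=> [_|<-] //.
by have /card_le1_eqP := eq_leq T1; apply.
Qed.

Lemma subdirectly_irreducible_meet_eq (A : rstruct) (B : algebra A)
    (J : Type) (P : J -> Prop) (th : J -> acar B -> acar B -> Prop) :
  subdirectly_irreducible B -> (forall j, P j -> congruence (th j)) ->
  (forall a a', (forall j, P j -> th j a a') -> a = a') ->
  exists j, P j /\ forall a a', th j a a' <-> a = a'.
Proof.
move=> [_ [m [m' [mm' below_all]]]] thcong meet_eq.
apply: NNPP => no_eq; apply: mm'; apply: meet_eq => j Pj.
apply: below_all; first exact: thcong.
by move=> th_eq; apply: no_eq; exists j.
Qed.

Lemma exists_neq (T : finType) (x : T) : 1 < #|T| -> exists y, y <> x.
Proof.
move=> /card_gt1P [x1 [x2 [_ _ /eqP x12]]].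
case: (eqVneq x1 x) => [x1x|/eqP]; last by exists x1.
by exists x2 => x2x; apply: x12; rewrite x1x x2x.
Qed.

Theorem mainTheorem7
  (A : rstruct)
  (Hmaj : has_majority_polymorphism A)
  (Hmal : has_maltsev_polymorphism A)
  (V : finType) (D : V -> algebra A)
  (R : forall x y : V, acar (D x) -> acar (D y) -> Prop)
  (HDvar : forall x, in_variety (D x))
  (HRsub : forall x y, subuniverse2 (R x y))
  (HReq : forall x (a b : acar (D x)), R x x a b <-> a = b)
  (HRinv : forall x y (a : acar (D x)) (b : acar (D y)), R y x b a <-> R x y a b)
  (HRsubdirect : forall x y, x <> y ->
      (forall a, exists b, R x y a b) /\ (forall b, exists a, R x y a b))
  (HV : 1 < #|V|)
  (Hdom : forall x, #|acar (D x)| = 1 \/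
                    (subdirectly_irreducible (D x) /\ prime_dom R x)) :
  forall x : V,
    (exists y, y <> x /\ forall a a', theta R x y a a' <-> a = a') /\
    (forall y, y <> x -> (forall a a', theta R x y a a' <-> a = a') ->
       exists f : acar (D y) -> acar (D x),
         [/\ hom f, (forall a, exists b, f b = a) &
             (forall b a, R y x b a <-> a = f b)]).
Proof.
move=> x.
have [p [Hp Hid]] := Hmal.
have mal := maltsev_op_in_variety Hp Hid.
have theta_cong y : y <> x -> congruence (theta R x y).
  move=> yx; apply: (rel_kernel_congruence (HRsub x y) (mal _ (HDvar x)) (mal _ (HDvar y))).
  exact: (HRsubdirect x y (nesym yx)).1.
split.
- case: (Hdom x) => [Dx1|[Dsi Dprime]].
  + have [y yx] := exists_neq x HV.
    by exists y; split=> //; apply: card1_reflexive_eq => //; case: (theta_cong y yx).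
  + by apply: (subdirectly_irreducible_meet_eq Dsi theta_cong) => a a' /Dprime.
- move=> y yx theta_eq.
  have [Rtotal Ronto] := HRsubdirect x y (nesym yx).
  have [f [fhom Rgraph]] := trivial_kernel_graph (HRsub x y) Ronto (fun a a' => (theta_eq a a').1).
  exists f; split=> // [a|b a]; last by rewrite HRinv.
  by have [b /Rgraph ->] := Rtotal a; exists b.
Qed.
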